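(* Let $q \geq 3$ and $n$ be integers, and let $1 \leq d \leq n/3$. Let $\mathcal{A} \subseteq [q]^n$ be such that for all $x^{(1)}=(x^{(1)}_1, \ldots, x^{(1)}_n)$, $x^{(2)}=(x^{(2)}_1, \ldots, x^{(2)}_n) \in \mathcal{A}$, $|\{i \in [n] \mid x^{(1)}_i = x^{(2)}_i\}| \geq d$. Then $|\mathcal{A}| < q^{\,n-\frac{d}{10}}$.
   Context: $[q]=\{1,\dots,q\}$. *)

From mathcomp Require Import all_boot.
From Stdlib Require Import Reals.
Set Implicit Arguments. Unset Strict Implicit. Unset Printing Implicit Defensive.

(* [q]^n is represented as {ffun 'I_n -> 'I_q} (coordinates indexed 0..n-1,
   symbols 0..q-1; a relabelling of [n] and [q]). *)
Definition agree (n q : nat) (x y : {ffun 'I_n -> 'I_q}) : nat :=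
  #|[set i : 'I_n | x i == y i]|.

Definition d_intersecting (n q d : nat) (A : {set {ffun 'I_n -> 'I_q}}) : Prop :=
  forall x y, x \in A -> y \in A -> d <= agree x y.

(* Split the words on their last letter.  If B and C are cross d-agreeing, then the
   slices B_a, C_a are cross (d-1)-agreeing while B_a, C_b (a <> b) are still cross
   d-agreeing.  By induction on n this gives |B| |C| q^d <= q^(2n) 2^d: the induction
   step is an inequality between two sums of q nonnegative numbers, proved by splitting
   off the largest slice of B.  For B = C = A this reads |A| <= q^n (2/q)^(d/2), which is
   below q^(n - d/10) because 2^5 < 3^4. *)

From mathcomp Require Import all_boot.
From mathcomp Require Import zify.
Set Implicit Arguments. Unset Strict Implicit. Unset Printing Implicit Defensive.

(* From the identity k (b + B)^2 + (k b - B) (k B - b) = k.+1^2 b B. *)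
Lemma sqr_addn_le_mul (k b B : nat) :
  B <= k * b -> b <= k * B -> k * (b + B) ^ 2 <= k.+1 ^ 2 * (b * B).
Proof.
move=> Bkb bkB.
have [x kbE] : exists x, k * b = B + x by exists (k * b - B); lia.
have [y kBE] : exists y, k * B = b + y by exists (k * B - b); lia.
suff : k * (b + B) ^ 2 + x * y = k.+1 ^ 2 * (b * B) by lia.
have kk : (B + x) * (b + y) = k ^ 2 * (b * B) by rewrite -kbE -kBE; nia.
have kbb : k * b * b = (B + x) * b by rewrite kbE.
have kBB : k * B * B = (b + y) * B by rewrite kBE.
nia.
Qed.

(* b, g are the terms at an index maximising b; B, G are the sums of the k other terms. *)
Lemma mulnDD_le (k b g B G Y : nat) :
  b * g <= Y -> k.+1 * (b * G) <= k * (2 * Y) -> k.+1 * (B * g) <= k * (2 * Y) ->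
  B <= k * b -> (b + B) * (g + G) <= 2 * k.+1 * Y.
Proof.
move=> bgY bGY BgY Bkb.
have [b0|b_pos] := posnP b.
  have B0 : B = 0 by rewrite b0 muln0 leqn0 in Bkb; apply/eqP.
  by rewrite b0 B0.
have [bkB|kBb] := leqP b (k * B).
- have B_pos : 0 < B by nia.
  have quad := sqr_addn_le_mul Bkb bkB.
  have lin : k.+1 * (b * B) * ((b + B) * (g + G)) <= (b + B) ^ 2 * (2 * k * Y).
    have -> : k.+1 * (b * B) * ((b + B) * (g + G)) =
              (b + B) * (b * (k.+1 * (B * g)) + B * (k.+1 * (b * G))) by nia.
    nia.
  rewrite -(leq_pmul2l (_ : 0 < k.+1 * (b * B))); nia.
- have cubic : (3 * k + 1) ^ 2 <= 2 * k.+1 ^ 3 by case: (k) => [|j] //; nia.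
  have kB : k.+1 * B <= 2 * k * b by nia.
  have lin : k.+1 ^ 2 * b * ((b + B) * (g + G)) <= (3 * k + 1) ^ 2 * (b * Y).
    have -> : k.+1 ^ 2 * b * ((b + B) * (g + G)) =
              (k.+1 * (b + B)) * (k.+1 * (b * g) + k.+1 * (b * G)) by nia.
    have h1 : k.+1 * (b + B) <= (3 * k + 1) * b by nia.
    have h2 : k.+1 * (b * g) + k.+1 * (b * G) <= (3 * k + 1) * Y by nia.
    by apply: leq_trans (leq_mul h1 h2) _; apply: eq_leq; nia.
  rewrite -(leq_pmul2l (_ : 0 < k.+1 ^ 2 * b)); nia.
Qed.

Lemma sum_mul_sum_le (I : finType) (u v : I -> nat) (Y : nat) :
  (forall i, u i * v i <= Y) ->
  (forall i j, i != j -> #|I| * (u i * v j) <= 2 * Y) ->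
  (\sum_i u i) * (\sum_i v i) <= 2 * #|I| * Y.
Proof.
move=> diag off.
have [i0 _|I0] := pickP (@predT I); last by rewrite big_pred0.
case: (@arg_maxnP _ i0 predT u isT) => m _ m_max.
have cardI : #|I| = #|predC1 m|.+1.
  by rewrite cardC1 prednK //; apply/card_gt0P; exists m.
rewrite (bigD1 m) //= (bigD1 m (P := predT)) //= cardI.
apply: mulnDD_le; rewrite -?cardI.
- exact: diag.
- rewrite -[#|predC1 m| * _]sum_nat_const !big_distrr /=.
  by apply: leq_sum => i ne; apply: off; rewrite eq_sym.
- rewrite -[#|predC1 m| * _]sum_nat_const big_distrl !big_distrr /=.
  by apply: leq_sum => i; exact: off.
- by rewrite -sum_nat_const; apply: leq_sum => i _; exact: m_max.
Qed.

Section CrossAgreeing.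

Variable q : nat.
Local Notation word n := {ffun 'I_n -> 'I_q}.

Definition cross_agreeing n d (B C : {set word n}) :=
  forall x y, x \in B -> y \in C -> d <= agree x y.

Definition init_word n (x : word n.+1) : word n :=
  [ffun i => x (widen_ord (leqnSn n) i)].

Definition slice n (B : {set word n.+1}) (a : 'I_q) : {set word n} :=
  @init_word n @: [set x in B | x ord_max == a].

Lemma card_words_le n (B : {set word n}) : #|B| <= q ^ n.
Proof.
apply: leq_trans (max_card _) _.
by rewrite card_ffun !card_ord.
Qed.

Lemma card_mul_card_le n (B C : {set word n}) : #|B| * #|C| <= q ^ (2 * n).
Proof. by rewrite mul2n -addnn expnD leq_mul ?card_words_le. Qed.

Lemma agree_le n (x y : word n) : agree x y <= n.
Proof. by rewrite /agree -[X in _ <= X](card_ord n) max_card. Qed.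

Lemma agree_sum n (x y : word n) : agree x y = \sum_(i < n) (x i == y i).
Proof.
rewrite /agree -sum1dep_card big_mkcond /=.
by apply: eq_bigr => i _; case: (x i == y i).
Qed.

Lemma agree_init n (x y : word n.+1) :
  agree x y = agree (init_word x) (init_word y) + (x ord_max == y ord_max).
Proof.
rewrite !agree_sum big_ord_recr /=; congr (_ + _).
by apply: eq_bigr => i _; rewrite !ffunE.
Qed.

Lemma init_word_inj n (x y : word n.+1) :
  init_word x = init_word y -> x ord_max = y ord_max -> x = y.
Proof.
move=> /ffunP xy_init xy_last; apply/ffunP => i.
have [j ->|-> //] := unliftP ord_max i.
have -> : lift ord_max j = widen_ord (leqnSn n) j.
  by apply: val_inj; rewrite /= /bump leqNgt ltn_ord.
by have := xy_init j; rewrite !ffunE.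
Qed.

Lemma card_slices n (B : {set word n.+1}) : #|B| = \sum_(a < q) #|slice B a|.
Proof.
rewrite -sum1_card (partition_big (fun x : word n.+1 => x ord_max) predT) //=.
apply: eq_bigr => a _; rewrite card_in_imset; last first.
  move=> x y; rewrite !inE => /andP[_ /eqP xa] /andP[_ /eqP ya] xy.
  by apply: init_word_inj => //; rewrite xa ya.
by rewrite sum1dep_card; apply: eq_card => x; rewrite !inE.
Qed.

Lemma cross_agreeing_slice n d (B C : {set word n.+1}) a b :
  cross_agreeing (d + (a == b)) B C -> cross_agreeing d (slice B a) (slice C b).
Proof.
move=> BC _ _ /imsetP[x /setIdP[xB /eqP xa] ->] /imsetP[y /setIdP[yC /eqP yb] ->].
by have := BC x y xB yC; rewrite agree_init xa yb leq_add2r.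
Qed.

Lemma card_cross_agreeing n d (B C : {set word n}) :
  cross_agreeing d B C -> #|B| * #|C| * q ^ d <= q ^ (2 * n) * 2 ^ d.
Proof.
elim: n d B C => [|n IH] [|d] B C BC; rewrite ?muln1; try exact: card_mul_card_le.
  have [->|[x xB]] := set_0Vmem B; first by rewrite cards0.
  have [->|[y yC]] := set_0Vmem C; first by rewrite cards0 muln0.
  by have := BC x y xB yC; have := agree_le x y; lia.
have diag a : q ^ d * #|slice B a| * #|slice C a| <= q ^ (2 * n) * 2 ^ d.
  have BCa : cross_agreeing (d + (a == a)) B C by rewrite eqxx addn1.
  by have := IH d _ _ (cross_agreeing_slice BCa); nia.
have off a b : a != b ->
    #|'I_q| * (q ^ d * #|slice B a| * #|slice C b|) <= 2 * (q ^ (2 * n) * 2 ^ d).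
  rewrite card_ord => ab.
  have BCab : cross_agreeing (d.+1 + (a == b)) B C by rewrite (negbTE ab) addn0.
  by have := IH d.+1 _ _ (cross_agreeing_slice BCab); rewrite !expnS; nia.
have := sum_mul_sum_le diag off.
rewrite card_ord -big_distrr /= -!card_slices.
move: #|B| #|C| => b c.
by rewrite mulnS expnD !expnS expn0 muln1; nia.
Qed.

End CrossAgreeing.

(* Imported only now: Reals rebinds [_ ^ _] on nat to [Nat.pow]. *)
From Stdlib Require Import Reals Lra.

Lemma INR_expn (m k : nat) : INR (expn m k) = (INR m ^ k)%R.
Proof. by elim: k => [|k IH] //; rewrite expnS mult_INR IH. Qed.

Section RealBound.

Local Open Scope R_scope.

Lemma five_ln2_lt_four_ln (x : R) : 3 <= x -> 5 * ln 2 < 4 * ln x.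
Proof.
move=> x3.
have -> : 5 * ln 2 = ln (2 ^ 5) by rewrite ln_pow /=; lra.
have -> : 4 * ln x = ln (x ^ 4) by rewrite ln_pow /=; lra.
apply: ln_increasing; first lra.
have : 3 ^ 4 <= x ^ 4 by apply: pow_incr; lra.
simpl; lra.
Qed.

Lemma lt_Rpower_from_square_bound (a x : R) (n d : nat) :
  0 <= a -> 3 <= x -> (1 <= d)%nat -> a * a * x ^ d <= x ^ (2 * n) * 2 ^ d ->
  a < Rpower x (INR n - INR d / 10).
Proof.
move=> a0 x3 d1 sq_bound; rewrite /Rpower.
have [->|a_pos] := Req_dec a 0; first exact: exp_pos.
have {}a_pos : 0 < a by lra.
have lnx_pos : 0 < ln x by rewrite -ln_1; apply: ln_increasing; lra.
have d_ge1 : 1 <= INR d by apply: (le_INR 1); apply/ssrnat.leP.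
have ln_bound : 2 * ln a + INR d * ln x <= 2 * INR n * ln x + INR d * ln 2.
  have x_pos : 0 < x by lra.
  have two_pos : 0 < 2 by lra.
  have aa_pos : 0 < a * a by nra.
  have lhs_pos := Rmult_lt_0_compat _ _ aa_pos (pow_lt _ d x_pos).
  have rhs_pos := Rmult_lt_0_compat _ _ (pow_lt _ (2 * n) x_pos) (pow_lt _ d two_pos).
  have : ln (a * a * x ^ d) <= ln (x ^ (2 * n) * 2 ^ d).
    by apply: Rnot_lt_le => lt; have := ln_lt_inv _ _ rhs_pos lhs_pos lt; lra.
  rewrite (ln_mult _ _ aa_pos (pow_lt _ d x_pos)) (ln_mult _ _ a_pos a_pos).
  rewrite (ln_mult _ _ (pow_lt _ (2 * n) x_pos) (pow_lt _ d two_pos)).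
  by rewrite !ln_pow // mult_INR /=; lra.
have ln_gap := five_ln2_lt_four_ln x3.
apply: (ln_lt_inv _ _ a_pos (exp_pos _)); rewrite ln_exp.
nra.
Qed.

End RealBound.

Theorem theorem1p3 (q n d : nat) (A : {set {ffun 'I_n -> 'I_q}}) :
  3 <= q -> 1 <= d -> 3 * d <= n ->
  d_intersecting d A ->
  (INR #|A| < Rpower (INR q) (INR n - INR d / 10))%R.
Proof.
move=> q3 d1 _ A_int.
apply: lt_Rpower_from_square_bound => //.
- exact: pos_INR.
- by have := le_INR _ _ (ssrnat.leP q3); rewrite /=; lra.
- have := le_INR _ _ (ssrnat.leP (card_cross_agreeing A_int)).
  by rewrite !mult_INR !INR_expn.
Qed.
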